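(* Let $d\ge 2$ and let $a_1,a_2,b_1,b_2$ be integers with $0<a_1<b_1\le d$, $0<a_2<b_2\leq d$, $a_1\leq a_2$, $b_1\leq b_2$, and $(a_1,b_1)\neq(a_2,b_2)$. Then $\ell_d^{(a_1,b_1)}(n)\geq \ell_d^{(a_2,b_2)}(n)$ for all $n\geq 1$, and $$\lim_{n\to\infty}\left(\ell_d^{(a_1,b_1)}(n)-\ell_d^{(a_2,b_2)}(n)\right)=+\infty.$$
   Context: A partition is a finite nonincreasing sequence of positive integers (its parts); its size is not fixed. The perimeter of a partition with largest part $\alpha$ and $\lambda$ parts is $\alpha+\lambda-1$. For $0<a<b\le d$, $\ell_d^{(a,b)}(n)$ is the number of partitions of perimeter $n$ all of whose parts are congruent to $a$ or $b$ modulo $d$. *)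

From mathcomp Require Import all_boot all_algebra.
Set Implicit Arguments. Unset Strict Implicit. Unset Printing Implicit Defensive.

Definition is_partition (s : seq nat) : bool :=
  all (fun x => 0 < x) s && sorted (fun x y => y <= x) s.

(* perimeter = largest part + number of parts - 1; only defined for nonempty partitions,
   for which the largest part is the head. *)
Definition perimeter (s : seq nat) : nat := head 0 s + size s - 1.

Definition parts_ab (d a b : nat) (s : seq nat) : bool :=
  all (fun x => (x == a %[mod d]) || (x == b %[mod d])) s.

Definition counted (d a b n : nat) (s : seq nat) : bool :=
  [&& s != [::], is_partition s, perimeter s == n & parts_ab d a b s].

(* A partition of perimeter n has at most n parts, each at most n, so it is
   represented exactly once as a k-tuple of elements of 'I_n.+1 for some k <= n. *)
Definition ell (d a b n : nat) : nat :=
  \sum_(k < n.+1) #|[set t : k.-tuple 'I_n.+1 | counted d a b n (map val t)]|.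

From mathcomp Require Import all_boot all_algebra zify.
Set Implicit Arguments. Unset Strict Implicit.

(* Within each block of d consecutive integers, move a part of residue a2 (resp. b2) down to
   the integer of residue a1 (resp. b1) in the same block.  This keeps the parts strictly
   ordered, and padding with copies of a1 restores the perimeter, so partitions counted by
   ell d a2 b2 n inject into those counted by ell d a1 b1 n.  Pick a part h0 that really
   moves, say to c = shift h0 > b1.  Then the n - c partitions c^(i+1) b1^(n-c-i) are counted
   by ell d a1 b1 n but avoid the image, which contains a1 as a part whenever its largest part
   is c: the difference of the two counts grows linearly. *)

Definition bounded_seqs n : seq (seq nat) :=
  flatten [seq [seq map val t | t : k.-tuple 'I_n.+1 <- enum {: k.-tuple 'I_n.+1}]
          | k <- iota 0 n.+1].

Lemma card_set_count (T : finType) (P : pred T) : #|[set t | P t]| = count P (enum T).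
Proof. by rewrite cardsE cardE -size_filter /enum_mem filter_predT. Qed.

Lemma ell_count d a b n : ell d a b n = count (counted d a b n) (bounded_seqs n).
Proof.
rewrite /ell /bounded_seqs count_flatten sumnE !big_map -val_enum_ord big_map.
by rewrite big_enum; apply: eq_bigr => k _; rewrite card_set_count count_map.
Qed.

Lemma mem_bounded_seqs n s :
  (s \in bounded_seqs n) = (size s <= n) && all (leq^~ n) s.
Proof.
apply/flatten_mapP/andP => [[k] | [s_le s_bnd]].
  rewrite mem_iota ltnS => /andP[_ k_le] /mapP[t _ ->].
  rewrite size_map size_tuple k_le; split=> //.
  by apply/allP => _ /mapP[i _ ->]; rewrite -ltnS ltn_ord.
exists (size s); first by rewrite mem_iota ltnS.
have sz : size [seq inord x : 'I_n.+1 | x <- s] == size s by rewrite size_map.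
apply/mapP; exists (Tuple sz); first by rewrite mem_enum.
rewrite /= -map_comp -[LHS]map_id; apply/eq_in_map => x /(allP s_bnd) x_le /=.
by rewrite inordK.
Qed.

Lemma uniq_flatten_sized (T : eqType) (ks : seq nat) (f : nat -> seq (seq T)) :
  uniq ks -> (forall k, uniq (f k)) -> (forall k s, s \in f k -> size s = k) ->
  uniq (flatten (map f ks)).
Proof.
move=> uniq_ks uniq_f size_f; elim: ks uniq_ks => //= k ks IHks /andP[k_ks uniq_ks].
rewrite cat_uniq uniq_f IHks // andbT; apply/hasPn => s /flatten_mapP[k' k'_ks s_k'].
apply: contra k_ks => s_k; rewrite -(size_f _ _ s_k) (size_f _ _ s_k') //.
Qed.

Lemma uniq_bounded_seqs n : uniq (bounded_seqs n).
Proof.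
apply: uniq_flatten_sized => [|k|k _ /mapP[t _ ->]]; rewrite ?iota_uniq ?size_map ?size_tuple //.
by rewrite map_inj_uniq ?enum_uniq // => t1 t2 /(inj_map val_inj)/val_inj.
Qed.

Section PositiveDivision.
Variable d : nat.

(* Remainders are taken in [1, d] rather than [0, d), so that residue d itself (b = d) is a
   remainder and the order of positive integers is lexicographic in (pquo, prem). *)
Definition prem x := (x.-1 %% d).+1.
Definition pquo x := x.-1 %/ d.

Lemma pdivn_eq x : 0 < x -> x = pquo x * d + prem x.
Proof. by case: x => // x _; rewrite /pquo /prem addnS -divn_eq. Qed.

Lemma prem_le x : 0 < d -> prem x <= d.
Proof. exact: ltn_pmod. Qed.

Lemma prem_pdiv q r : 0 < r <= d -> prem (q * d + r) = r.
Proof. by case: r => // r r_le; rewrite /prem addnS modnMDl modn_small. Qed.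

Lemma pquo_pdiv q r : 0 < r <= d -> pquo (q * d + r) = q.
Proof.
case: r => // r r_le; rewrite /pquo addnS divnMDl ?divn_small ?addn0 //.
exact: leq_ltn_trans r_le.
Qed.

Lemma ltn_pdiv q q' r r' : 0 < r <= d -> 0 < r' <= d ->
  (q * d + r < q' * d + r') = (q < q') || (q == q') && (r < r').
Proof.
move=> /andP[r_gt0 r_le] /andP[r'_gt0 r'_le].
case: (ltngtP q q') => [q_lt | q_gt | ->]; last by rewrite ltn_add2l.
- have : q.+1 * d <= q' * d by rewrite leq_mul2r q_lt orbT.
  by rewrite mulSn; lia.
- have : q'.+1 * d <= q * d by rewrite leq_mul2r q_gt orbT.
  by rewrite mulSn; lia.
Qed.

Lemma eqn_mod_prem a x : 0 < a <= d -> 0 < x -> (x == a %[mod d]) = (prem x == a).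
Proof.
case: a x => [|a] [|x] // a_lt _.
by rewrite /prem /= eqSS -[x.+1]addn1 -[a.+1]addn1 eqn_modDr (modn_small a_lt).
Qed.

End PositiveDivision.

Definition ab_part d a b : pred nat :=
  fun x => (0 < x) && ((x == a %[mod d]) || (x == b %[mod d])).

Lemma ab_partE d a b x : 0 < a -> a < b -> b <= d ->
  ab_part d a b x = (0 < x) && ((prem d x == a) || (prem d x == b)).
Proof.
move=> a_gt0 a_lt b_le; rewrite /ab_part; case: posnP => //= x_gt0.
by rewrite !eqn_mod_prem //; lia.
Qed.

Lemma path_geq_nseq x k a : a <= x -> path geq x (nseq k a).
Proof. by elim: k x => //= k IHk x ->; apply: IHk. Qed.

Lemma sorted_geq_nseq k a : sorted geq (nseq k a).
Proof. by case: k => //= k; apply: path_geq_nseq. Qed.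

Lemma sorted_geq_cat_nseq k a s :
  sorted geq s -> all (leq a) s -> sorted geq (s ++ nseq k a).
Proof.
case: s => [_ _ | x s]; first exact: sorted_geq_nseq.
move=> + /allP a_le; rewrite /= cat_path => -> /=.
apply: path_geq_nseq; apply: a_le; exact: mem_last.
Qed.

Lemma countedE d a b n h t : counted d a b n (h :: t) =
  [&& all (ab_part d a b) (h :: t), sorted geq (h :: t) & h + size t == n].
Proof.
rewrite /counted /is_partition /parts_ab /perimeter /= addnS subn1 /=.
rewrite [all (ab_part d a b) t]all_predI /ab_part.
rewrite -[path _ h t]/(path geq h t) -[all [eta leq 1] t]/(all (leq 1) t).
by case: (0 < h); case: (h == a %[mod d]); case: (h == b %[mod d]);
  case: (all (leq 1) t); case: (path geq h t); case: (h + size t == n);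
  rewrite /= ?andbT ?andbF.
Qed.

Lemma counted_bounded d a b n s : counted d a b n s -> s \in bounded_seqs n.
Proof.
case: s => // h t; rewrite countedE mem_bounded_seqs.
move=> /and3P[/andP[/andP[h_gt0 _] _] sorted_ht /eqP size_ht].
have h_le : h <= n by lia.
rewrite /= (_ : size t < n) ?h_le /=; last by lia.
apply/allP => x x_t; apply: leq_trans h_le.
by have /allP := order_path_min (rev_trans leq_trans) sorted_ht; apply.
Qed.

Lemma ell_ge_uniq d a b n s :
  uniq s -> all (counted d a b n) s -> size s <= ell d a b n.
Proof.
move=> uniq_s /allP s_counted; rewrite ell_count -size_filter.
apply: uniq_leq_size => // x /s_counted x_counted.
by rewrite mem_filter x_counted (counted_bounded x_counted).
Qed.

Section ResidueShift.
Variables d a1 b1 a2 b2 : nat.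
Hypotheses (a1_gt0 : 0 < a1) (a1_lt : a1 < b1) (b1_le : b1 <= d).
Hypotheses (a2_gt0 : 0 < a2) (a2_lt : a2 < b2) (b2_le : b2 <= d).
Hypotheses (a1_le : a1 <= a2) (b1_le_b2 : b1 <= b2).

Definition shift_digit r := if r == a2 then a1 else b1.
Definition shift x := pquo d x * d + shift_digit (prem d x).

Let d_gt0 : 0 < d. Proof. lia. Qed.

Lemma ab_part_shift x : ab_part d a1 b1 (shift x).
Proof.
rewrite /ab_part /shift !modnMDl /shift_digit.
by case: eqP; rewrite eqxx ?orbT; lia.
Qed.

Lemma leq_a1_shift x : a1 <= shift x.
Proof. rewrite /shift /shift_digit; case: eqP; lia. Qed.

Lemma leq_shift_self x : ab_part d a2 b2 x -> shift x <= x.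
Proof.
rewrite ab_partE // => /andP[x_gt0 x_ab]; rewrite {2}(pdivn_eq d x_gt0) leq_add2l.
by rewrite /shift_digit; case/orP: x_ab => /eqP ->; rewrite ?eqxx // ifN //; lia.
Qed.

Lemma shift_homo : {in ab_part d a2 b2 &, {homo shift : x y / x < y}}.
Proof.
move=> x y; rewrite -!topredE /= !ab_partE // => /andP[x_gt0 x_ab] /andP[y_gt0 y_ab].
have digit_bounds r : 0 < shift_digit r <= d by rewrite /shift_digit; case: eqP; lia.
have prem_bounds z : 0 < prem d z <= d by rewrite prem_le.
rewrite {1}(pdivn_eq d x_gt0) {1}(pdivn_eq d y_gt0) /shift !ltn_pdiv //.
case/orP => [-> // | /andP[-> r_lt]]; rewrite orbC /=.
move: x_ab y_ab r_lt; rewrite /shift_digit.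
by do 2 case/orP => /eqP ->; rewrite ?eqxx ?ltnn // ifN //; lia.
Qed.

Lemma shift_mono : {in ab_part d a2 b2 &, {mono shift : x y / x <= y}}.
Proof. exact: leq_mono_in shift_homo. Qed.

Lemma shift_inj : {in ab_part d a2 b2 &, injective shift}.
Proof. exact: incn_inj_in shift_mono. Qed.

Lemma exists_shift_drop : (a1, b1) != (a2, b2) ->
  exists2 h, ab_part d a2 b2 h & b1 < shift h < h.
Proof.
move=> neq; set r := if a1 < a2 then a2 else b2.
have r_drop : shift_digit r < r.
  rewrite /r /shift_digit; case: (ltnP a1 a2) => [a1_lt_a2 | a2_le_a1]; first by rewrite eqxx.
  have : b1 != b2 by apply: contraNneq neq => ->; rewrite (_ : a1 = a2) //; lia.
  rewrite ifN; lia.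
have r_pdiv : 0 < r <= d by rewrite /r; case: ifP; lia.
exists (1 * d + r).
  by rewrite ab_partE // prem_pdiv // /r; case: ifP; rewrite eqxx ?orbT; lia.
rewrite /shift prem_pdiv // pquo_pdiv //.
apply/andP; split; first by rewrite /shift_digit; case: ifP; lia.
by rewrite ltn_add2l.
Qed.

Definition shift_partition p := map shift p ++ nseq (head 0 p - shift (head 0 p)) a1.

Lemma counted_shift_partition n p :
  counted d a2 b2 n p -> counted d a1 b1 n (shift_partition p).
Proof.
case: p => // h t; rewrite !countedE => /and3P[p_ab p_sorted /eqP p_size].
have h_ab : ab_part d a2 b2 h by case/andP: p_ab.
apply/and3P; split.
- rewrite /= all_cat all_nseq ab_part_shift /ab_part a1_gt0 eqxx orbT andbT.
  by apply/allP => _ /mapP[x _ ->]; apply: ab_part_shift.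
- apply: (sorted_geq_cat_nseq _ _ (s := map shift (h :: t))).
    by apply: (homo_sorted_in _ p_ab p_sorted) => x y x_ab y_ab; rewrite /= shift_mono.
  by rewrite all_map; apply/allP => x _; apply: leq_a1_shift.
- by rewrite /= size_cat size_map size_nseq; have := leq_shift_self h_ab; lia.
Qed.

Lemma shift_partition_inj n p q : counted d a2 b2 n p -> counted d a2 b2 n q ->
  shift_partition p = shift_partition q -> p = q.
Proof.
case: p q => [|h t] [|h' t'] //; rewrite !countedE.
move=> /and3P[/andP[h_ab t_ab] _ /eqP size_t] /and3P[/andP[h'_ab t'_ab] _ /eqP size_t'].
case=> eq_h eq_tail.
have eq_hh' : h = h' by apply: shift_inj.
subst h'; have eq_size : size t = size t' by lia.
congr (_ :: _); apply: (inj_in_map shift_inj) => //.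
move/(congr1 (take (size t))): eq_tail.
by rewrite take_size_cat ?size_map // eq_size take_size_cat ?size_map.
Qed.

Definition mixed_partitions c n :=
  [seq nseq i.+1 c ++ nseq (n - c - i) b1 | i <- iota 0 (n - c)].

Lemma counted_mixed c n :
  ab_part d a1 b1 c -> b1 <= c -> all (counted d a1 b1 n) (mixed_partitions c n).
Proof.
move=> c_ab b1_c; apply/allP => w /mapP[i]; rewrite mem_iota => i_lt ->.
rewrite countedE; apply/and3P; split.
- by rewrite /= all_cat !all_nseq c_ab /ab_part (leq_trans a1_gt0 (ltnW a1_lt)) eqxx !orbT.
- apply: (sorted_geq_cat_nseq _ _ (s := nseq i.+1 c)); last by rewrite all_nseq b1_c orbT.
  exact: sorted_geq_nseq.
- by rewrite size_cat !size_nseq; lia.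
Qed.

Lemma uniq_mixed c n : b1 < c -> uniq (mixed_partitions c n).
Proof.
move=> b1_c; rewrite map_inj_uniq ?iota_uniq // => i j /(congr1 (count_mem c)) count_c.
by rewrite !count_cat !count_nseq /= eqxx (ltn_eqF b1_c) /= !addn0 !mul1n in count_c; case: count_c.
Qed.

Lemma shift_partition_notin_mixed h0 n p :
  ab_part d a2 b2 h0 -> b1 < shift h0 < h0 -> counted d a2 b2 n p ->
  shift_partition p \notin mixed_partitions (shift h0) n.
Proof.
move=> h0_ab /andP[b1_lt drop_h0]; case: p => // h t.
rewrite countedE => /and3P[/andP[h_ab _] _ _]; apply/mapP => -[i _ eq_p].
have eq_h : h = h0 by apply: shift_inj => //; move/(congr1 (head 0)): eq_p.
have : a1 \in shift_partition (h :: t).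
  by rewrite mem_cat mem_nseq subn_gt0 eq_h drop_h0 eqxx orbT.
by rewrite eq_p mem_cat !mem_nseq !ltn_eqF ?andbF // (ltn_trans a1_lt).
Qed.

Lemma ell_shift_bound : (a1, b1) != (a2, b2) ->
  exists c, forall n, ell d a2 b2 n + (n - c) <= ell d a1 b1 n.
Proof.
case/exists_shift_drop => h0 h0_ab h0_drop; have /andP[b1_c _] := h0_drop; exists (shift h0) => n.
set P2 := filter (counted d a2 b2 n) (bounded_seqs n).
have -> : ell d a2 b2 n + (n - shift h0) =
    size (map shift_partition P2 ++ mixed_partitions (shift h0) n).
  by rewrite size_cat size_map size_filter ell_count size_map size_iota.
apply: ell_ge_uniq.
- rewrite cat_uniq uniq_mixed // andbT map_inj_in_uniq ?filter_uniq ?uniq_bounded_seqs //.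
    apply/hasPn => w w_mixed; apply/mapP => -[p]; rewrite mem_filter => /andP[p_counted _] eq_w.
    by move: w_mixed; rewrite eq_w (negbTE (shift_partition_notin_mixed h0_ab h0_drop p_counted)).
  move=> p q; rewrite !mem_filter => /andP[p_counted _] /andP[q_counted _].
  exact: (shift_partition_inj p_counted q_counted).
- rewrite all_cat counted_mixed ?(ltnW b1_c) ?ab_part_shift // andbT all_map.
  by apply/allP => p; rewrite mem_filter => /andP[p_counted _]; apply: counted_shift_partition.
Qed.

End ResidueShift.

Theorem proposition1p4 (d a1 b1 a2 b2 : nat) :
  2 <= d ->
  0 < a1 -> a1 < b1 -> b1 <= d ->
  0 < a2 -> a2 < b2 -> b2 <= d ->
  a1 <= a2 -> b1 <= b2 -> (a1, b1) != (a2, b2) ->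
  (forall n, 1 <= n -> ell d a2 b2 n <= ell d a1 b1 n) /\
  (forall M : int, exists N : nat, forall n : nat, N <= n ->
     (M <= (ell d a1 b1 n)%:Z - (ell d a2 b2 n)%:Z)%R).
Proof.
move=> _ a1_gt0 a1_lt b1_le a2_gt0 a2_lt b2_le a1_le b1_le_b2 neq.
have [c bound] := ell_shift_bound a1_gt0 a1_lt b1_le a2_gt0 a2_lt b2_le a1_le b1_le_b2 neq.
split=> [n _ | M]; first by have := bound n; lia.
by exists (`|M| + c)%N => n n_ge; have := bound n; lia.
Qed.
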